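(* Let $\mathcal{LS}_{\mathfrak{B}_1}\langle X\rangle$ be the free algebra over a field of characteristic $0$ in the variety of left-symmetric algebras satisfying $(ab)c-(ba)c-(ac)b+(ca)b+(bc)a-(cb)a=0$, and equip it with the anticommutator $\{a,b\}=ab+ba$. Then every polynomial identity of degree at most $4$ satisfied by $(\mathcal{LS}_{\mathfrak{B}_1}\langle X\rangle,\{\cdot,\cdot\})$ is a consequence of commutativity.
   Context: A left-symmetric algebra is an algebra with $(a,b,c)=(b,a,c)$, where $(a,b,c)=(ab)c-a(bc)$. *)

From HB Require Import structures.
From mathcomp Require Import all_boot all_algebra.
Set Implicit Arguments. Unset Strict Implicit. Unset Printing Implicit Defensive.
Import GRing.Theory.
Local Open Scope ring_scope.

Inductive term : Type := Var of nat | Mul of term & term.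

Fixpoint term_eqb (s t : term) : bool :=
  match s, t with
  | Var m, Var n => m == n
  | Mul s1 s2, Mul t1 t2 => term_eqb s1 t1 && term_eqb s2 t2
  | _, _ => false
  end.

Lemma term_eqP : Equality.axiom term_eqb.
Proof.
elim=> [m|s1 IH1 s2 IH2] [n|t1 t2] /=; try by constructor.
- by apply: (iffP eqP) => [->|[]].
- by apply: (iffP andP) => [[/IH1 -> /IH2 ->]|[<- <-]]; split; [apply/IH1|apply/IH2].
Qed.
HB.instance Definition _ := hasDecEq.Build term term_eqP.

Fixpoint deg (t : term) : nat :=
  match t with Var _ => 1 | Mul s u => deg s + deg u end.

Section FreeNA.
Variable K : fieldType.

(* an element of the free nonassociative algebra K{X}, X = {x_0, x_1, ...},
   represented as a finite formal linear combination of monomials *)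
Definition napoly := seq (K * term).

Definition coef (f : napoly) (t : term) : K := \sum_(p <- f | p.2 == t) p.1.
(* equality in the free nonassociative algebra *)
Definition peq (f g : napoly) : Prop := forall t, coef f t = coef g t.

Definition padd (f g : napoly) : napoly := f ++ g.
Definition pscale (c : K) (f : napoly) : napoly := [seq (c * p.1, p.2) | p <- f].
Definition pmul (f g : napoly) : napoly :=
  [seq (p.1 * q.1, Mul p.2 q.2) | p <- f, q <- g].
Definition pvar (n : nat) : napoly := [:: (1, Var n)].

Fixpoint msubst (sigma : nat -> napoly) (t : term) : napoly :=
  match t with
  | Var n => sigma n
  | Mul s u => pmul (msubst sigma s) (msubst sigma u)
  end.
Definition psubst (sigma : nat -> napoly) (f : napoly) : napoly :=
  flatten [seq pscale p.1 (msubst sigma p.2) | p <- f].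

Inductive Tideal (gens : seq napoly) : napoly -> Prop :=
  | T_gen g : g \in gens -> Tideal gens g
  | T_zero : Tideal gens [::]
  | T_eq f g : Tideal gens f -> peq f g -> Tideal gens g
  | T_add f g : Tideal gens f -> Tideal gens g -> Tideal gens (padd f g)
  | T_scale c f : Tideal gens f -> Tideal gens (pscale c f)
  | T_mull h f : Tideal gens f -> Tideal gens (pmul h f)
  | T_mulr h f : Tideal gens f -> Tideal gens (pmul f h)
  | T_subst sigma f : Tideal gens f -> Tideal gens (psubst sigma f).

Definition x0 := Var 0. Definition x1 := Var 1. Definition x2 := Var 2.

Definition comm_id : napoly := [:: (1, Mul x0 x1); (-1, Mul x1 x0)].

(* left-symmetry: (a,b,c) - (b,a,c) with (a,b,c) = (ab)c - a(bc) *)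
Definition lsym_id : napoly :=
  [:: (1, Mul (Mul x0 x1) x2); (-1, Mul x0 (Mul x1 x2));
      (-1, Mul (Mul x1 x0) x2); (1, Mul x1 (Mul x0 x2))].

Definition B1_id : napoly :=
  [:: (1, Mul (Mul x0 x1) x2); (-1, Mul (Mul x1 x0) x2);
      (-1, Mul (Mul x0 x2) x1); (1, Mul (Mul x2 x0) x1);
      (1, Mul (Mul x1 x2) x0); (-1, Mul (Mul x2 x1) x0)].

(* The free algebra LS_B1<X> is K{X} / Tideal [:: lsym_id; B1_id].
   Evaluation of a nonassociative polynomial f in the anticommutator
   {a,b} = ab + ba, computed on representatives in K{X}. *)
Definition panti (f g : napoly) : napoly := padd (pmul f g) (pmul g f).
Fixpoint meval_anti (v : nat -> napoly) (t : term) : napoly :=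
  match t with
  | Var n => v n
  | Mul s u => panti (meval_anti v s) (meval_anti v u)
  end.
Definition peval_anti (v : nat -> napoly) (f : napoly) : napoly :=
  flatten [seq pscale p.1 (meval_anti v p.2) | p <- f].

Definition is_identity_LSB1_anti (f : napoly) : Prop :=
  forall v : nat -> napoly, Tideal [:: lsym_id; B1_id] (peval_anti v f).

Definition conseq_comm (f : napoly) : Prop := Tideal [:: comm_id] f.

End FreeNA.

From Stdlib Require Import ZArith NArith Lia FMapPositive.
From HB Require Import structures.
From mathcomp Require Import all_boot all_algebra.
From mathcomp Require Import ssrZ zify ring.
Import GRing.Theory.

(* An identity f of degree at most 4 is a consequence of commutativity as soon as, for every
   monomial s, the coefficients of f on the monomials equal to s up to commutativity sum to 0.
   To obtain this for an identity of (LS_B1<X>, {.,.}), evaluate it in a 93-dimensional algebra B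
   that satisfies the left-symmetric and B_1 identities and is spanned by the products of
   distinct generators e_0, ..., e_3. Given s of degree at most 4, substitute for each variable
   the sum of the generators e_p over the positions p where it occurs in s. Some linear form on
   B then takes one nonzero value on the anticommutator evaluation of every monomial equal to s
   up to commutativity, and vanishes on those of all other monomials of degree at most 4. Applied
   to the evaluation of f, which is 0, it returns that value times the class sum of f at s.
   The facts about B are finitely many integer computations; characteristic 0 keeps the value
   nonzero in K. *)

Set Implicit Arguments. Unset Strict Implicit. Unset Printing Implicit Defensive.

(* ssrint rebinds the key %Z to int_scope; BinInt's Z needs it back. *)
Delimit Scope Z_scope with Z.

Fixpoint leaves (t : term) : seq nat :=
  match t with Var n => [:: n] | Mul a b => leaves a ++ leaves b end.

Fixpoint rename (r : nat -> nat) (t : term) : term :=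
  match t with Var n => Var (r n) | Mul a b => Mul (rename r a) (rename r b) end.

Lemma size_leaves t : size (leaves t) = deg t.
Proof. by elim: t => [n|a IHa b IHb] //=; rewrite size_cat IHa IHb. Qed.

Lemma deg_gt0 t : 0 < deg t.
Proof. by elim: t => [n|a IHa b IHb] //=; rewrite addn_gt0 IHa. Qed.

Lemma leaves_rename r t : leaves (rename r t) = map r (leaves t).
Proof. by elim: t => [n|a IHa b IHb] //=; rewrite IHa IHb map_cat. Qed.

Lemma deg_rename r t : deg (rename r t) = deg t.
Proof. by rewrite -!size_leaves leaves_rename size_map. Qed.

Lemma eq_in_rename r r' t : {in leaves t, r =1 r'} -> rename r t = rename r' t.
Proof.
elim: t => [n|a IHa b IHb] /= eq_r; first by rewrite eq_r ?mem_head.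
by rewrite IHa ?IHb // => x x_in; apply: eq_r; rewrite mem_cat x_in ?orbT.
Qed.

Lemma rename_comp r r' t : rename r (rename r' t) = rename (r \o r') t.
Proof. by elim: t => [n|a IHa b IHb] //=; rewrite IHa IHb. Qed.

Fixpoint comm_eqb (s t : term) : bool :=
  match s, t with
  | Var m, Var n => m == n
  | Mul s1 s2, Mul t1 t2 =>
      (comm_eqb s1 t1 && comm_eqb s2 t2) || (comm_eqb s1 t2 && comm_eqb s2 t1)
  | _, _ => false
  end.

Lemma mem_leaves_comm_eqb s t x : comm_eqb s t -> x \in leaves s -> x \in leaves t.
Proof.
elim: s t => [m|a IHa b IHb] [n|c d] //=; first by move/eqP->.
rewrite !mem_cat => /orP[]/andP[ac bd] /orP[] x_in;
  by rewrite ?(IHa _ ac x_in) ?(IHb _ bd x_in) ?orbT.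
Qed.

Lemma comm_eqb_rename r s t :
  {in leaves s ++ leaves t &, injective r} ->
  comm_eqb (rename r s) (rename r t) = comm_eqb s t.
Proof.
elim: s t => [m|a IHa b IHb] [n|c d] //= r_inj.
  by rewrite (inj_in_eq r_inj) ?mem_head ?inE ?eqxx ?orbT.
have sub u v : {subset leaves u ++ leaves v <= (leaves a ++ leaves b) ++ leaves c ++ leaves d}
  -> {in leaves u ++ leaves v &, injective r} by move=> uv; apply: sub_in2 r_inj.
rewrite IHa ?IHb ?(IHa d) ?(IHb c) //; apply: sub => x;
  by rewrite !mem_cat => /orP[] ->; rewrite ?orbT.
Qed.

Fixpoint term_code (t : term) : GenTree.tree nat :=
  match t with
  | Var n => GenTree.Leaf n
  | Mul a b => GenTree.Node 0 [:: term_code a; term_code b]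
  end.

Lemma term_code_inj : injective term_code.
Proof.
elim=> [m|a IHa b IHb] [n|c d] //=; first by case=> ->.
by case=> /IHa -> /IHb ->.
Qed.

Definition term_rank (t : term) : nat := pickle (term_code t).

Lemma term_rank_inj : injective term_rank.
Proof. by move=> s t /(pcan_inj pickleK) /term_code_inj. Qed.

Definition mul_sorted (a b : term) : term :=
  if term_rank a <= term_rank b then Mul a b else Mul b a.

Lemma mul_sortedC : commutative mul_sorted.
Proof.
by move=> a b; rewrite /mul_sorted; case: ltngtP => // /term_rank_inj ->.
Qed.

Fixpoint comm_nf (t : term) : term :=
  match t with Var n => Var n | Mul a b => mul_sorted (comm_nf a) (comm_nf b) end.

Lemma comm_eqbE s t : comm_eqb s t = (comm_nf s == comm_nf t).
Proof.
apply/idP/eqP.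
  elim: s t => [m|s1 IH1 s2 IH2] [n|t1 t2] //=; first by move/eqP->.
  by case/orP=> /andP[/IH1 -> /IH2 ->] //; rewrite mul_sortedC.
elim: s t => [m|s1 IH1 s2 IH2] [n|t1 t2] /=; rewrite /mul_sorted.
- by case=> ->.
- by case: ifP.
- by case: ifP.
do 2 case: ifP => _; case=> e1 e2;
  first [by rewrite (IH1 _ e1) (IH2 _ e2) ?orbT | by rewrite (IH1 _ e2) (IH2 _ e1) ?orbT].
Qed.

Fixpoint trees_le (labs : seq nat) (n : nat) : seq term :=
  if n is n'.+1 then
    let T := trees_le labs n' in
    map Var labs ++ [seq t <- [seq Mul a b | a <- T, b <- T] | deg t <= n]
  else [::].

Lemma mem_trees_le labs n t :
  deg t <= n -> {subset leaves t <= labs} -> t \in trees_le labs n.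
Proof.
elim: n t => [|n IH] t.
  by rewrite leqn0 => /eqP deg0; have := deg_gt0 t; rewrite deg0.
case: t => [m|a b] /= deg_le sub; rewrite mem_cat.
  by rewrite map_f ?sub ?mem_head.
have := deg_gt0 a; have := deg_gt0 b => b_gt0 a_gt0.
rewrite mem_filter deg_le /= allpairs_f ?orbT // IH //; try lia;
  by move=> x x_in; apply: sub; rewrite mem_cat x_in ?orbT.
Qed.

Definition canon (s : term) : term := rename (index^~ (leaves s)) s.

Definition normalized (s : term) : bool := canon s == s.

Lemma index_map_in (T T' : eqType) (f : T -> T') s x :
  {in s &, injective f} -> x \in s -> index (f x) (map f s) = index x s.
Proof.
elim: s => //= y s IH f_inj x_in; rewrite (inj_in_eq f_inj) ?mem_head //.
case: (y =P x) => // neq_yx; congr _.+1; apply: IH.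
  by apply: sub_in2 f_inj => z; apply: predU1r.
by move: x_in; rewrite inE => /predU1P[x_y|//]; case: neq_yx.
Qed.

Lemma canon_idem s : canon (canon s) = canon s.
Proof.
rewrite /canon leaves_rename rename_comp; apply: eq_in_rename => x x_in /=.
by rewrite (index_map_in (f := index^~ _)) //; apply: index_inj.
Qed.

Lemma leaves_canon s x : x \in leaves (canon s) -> x < deg s.
Proof. by rewrite leaves_rename => /mapP[y y_in ->]; rewrite -size_leaves index_mem. Qed.

Local Open Scope ring_scope.

Ltac coef_cases u :=
  repeat match goal with |- context [?x == u] => case: (x == u) end;
  rewrite ?mulr1 ?mul1r ?mulrN1 ?mulN1r ?addr0 ?add0r ?mulr0 ?mul0r; ring.

Section Consequences.
Variable K : fieldType.
Implicit Types (f g : napoly K) (s t : term).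

Lemma coef_pnil t : coef ([::] : napoly K) t = 0.
Proof. by rewrite /coef big_nil. Qed.

Lemma coef_pcons (p : K * term) f t :
  coef (p :: f) t = (if p.2 == t then p.1 else 0) + coef f t.
Proof. by rewrite /coef big_cons; case: ifP; rewrite ?add0r. Qed.

Lemma coef_cat f g t : coef (f ++ g) t = coef f t + coef g t.
Proof. by rewrite /coef big_cat. Qed.

Definition class_coef f s : K := \sum_(p <- f | comm_eqb p.2 s) p.1.

Lemma conseq_comm_nf t : conseq_comm ([:: (1, t); (-1, comm_nf t)] : napoly K).
Proof.
elim: t => [n|a IHa b IHb].
  apply: (T_eq (T_zero _)) => u; rewrite !coef_pcons coef_pnil /=; coef_cases u.
set a' := comm_nf a; set b' := comm_nf b.
have Ta'b := T_add (T_mulr [:: (1, b)] IHa) (T_mull [:: (1, a')] IHb).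
pose sigma n : napoly K := if n == 0%N then [:: (1, a')] else [:: (1, b')].
have Tswap := T_subst sigma (T_gen (mem_head (comm_id K) [::])).
rewrite /= /mul_sorted -/a' -/b'; case: ifP => _.
  apply: (T_eq Ta'b) => u; rewrite /padd /pmul /= ?coef_cat !coef_pcons !coef_pnil /=.
  by coef_cases u.
apply: (T_eq (T_add Ta'b Tswap)) => u.
rewrite /padd /pmul /psubst /pscale /comm_id /= ?coef_cat !coef_pcons !coef_pnil /=.
by coef_cases u.
Qed.

(* f is the sum of the consequences c (t - comm_nf t) and of the list of the c (comm_nf t),
   whose coefficients are class sums of f. *)
Lemma conseq_comm_of_class_coef f :
  (forall p, p \in f -> class_coef f p.2 = 0) -> conseq_comm f.
Proof.
move=> class0.
pose D := flatten [seq pscale p.1 [:: (1, p.2); (-1, comm_nf p.2)] | p <- f].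
pose N : napoly K := [seq (p.1, comm_nf p.2) | p <- f].
have TD : conseq_comm D.
  rewrite /D; elim: (f) => [|p f' IH] /=; first exact: T_zero.
  exact: T_add (T_scale _ (conseq_comm_nf _)) IH.
have TN : conseq_comm N.
  apply: (T_eq (T_zero _)) => u; rewrite coef_pnil /coef /N big_map /=.
  have [[p pf /eqP <-]|nf_u] := altP (@hasP _ (fun p : K * term => comm_nf p.2 == u) f).
    rewrite -[LHS](class0 p pf); apply: eq_bigl => q /=; by rewrite comm_eqbE.
  by rewrite big_hasC.
apply: (T_eq (T_add TD TN)) => u.
rewrite /D /N; elim: (f) => [|p f' IH] //=.
rewrite /padd coef_cat in IH; rewrite /padd !coef_pcons !coef_cat coef_pcons -IH /=.
by coef_cases u.
Qed.

End Consequences.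

Section Evaluation.
Variables (K : fieldType) (V : lmodType K) (bmul : V -> V -> V).
Hypotheses (bmulDl : forall u u' v, bmul (u + u') v = bmul u v + bmul u' v)
           (bmulDr : forall u v v', bmul u (v + v') = bmul u v + bmul u v')
           (bmulZl : forall a u v, bmul (a *: u) v = a *: bmul u v)
           (bmulZr : forall a u v, bmul u (a *: v) = a *: bmul u v).
Implicit Types (w : nat -> V) (f g : napoly K).

Lemma bmul0l v : bmul 0 v = 0.
Proof. by have := bmulZl 0 0 v; rewrite !scale0r. Qed.

Lemma bmul0r u : bmul u 0 = 0.
Proof. by have := bmulZr 0 u 0; rewrite !scale0r. Qed.

Lemma bmul_suml I (r : seq I) (F : I -> V) v :
  bmul (\sum_(i <- r) F i) v = \sum_(i <- r) bmul (F i) v.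
Proof. exact: (big_morph (bmul^~ v) (fun u u' => bmulDl u u' v) (bmul0l v)). Qed.

Lemma bmul_sumr I (r : seq I) (F : I -> V) u :
  bmul u (\sum_(i <- r) F i) = \sum_(i <- r) bmul u (F i).
Proof. exact: (big_morph (bmul u) (bmulDr u) (bmul0r u)). Qed.

Fixpoint meval w (t : term) : V :=
  match t with Var n => w n | Mul a b => bmul (meval w a) (meval w b) end.

Definition eval w f : V := \sum_(p <- f) p.1 *: meval w p.2.

Lemma eq_in_meval w w' t : {in leaves t, w =1 w'} -> meval w t = meval w' t.
Proof.
elim: t => [n|a IHa b IHb] /= eq_w; first by rewrite eq_w ?mem_head.
by rewrite IHa ?IHb // => x x_in; apply: eq_w; rewrite mem_cat x_in ?orbT.
Qed.

Lemma eq_eval w w' f : w =1 w' -> eval w f = eval w' f.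
Proof.
by move=> eq_w; apply: eq_bigr => p _; congr (_ *: _); apply: eq_in_meval => x _.
Qed.

Definition set_var w n (x : V) : nat -> V := fun m => if m == n then x else w m.

Lemma meval_set_var_notin w n x t :
  count_mem n (leaves t) = 0 -> meval (set_var w n x) t = meval w t.
Proof.
move=> /eqP; rewrite -leqn0 leqNgt -has_count has_pred1 => n_notin.
apply: eq_in_meval => m m_in; rewrite /set_var; case: eqP => // mn.
by rewrite -mn m_in in n_notin.
Qed.

Lemma linear_meval w n t :
  count_mem n (leaves t) = 1 -> linear (fun x => meval (set_var w n x) t).
Proof.
elim: t => [m|a IHa b IHb] /=.
  by rewrite addn0 /set_var eq_sym; case: eqP.
rewrite count_cat => count_n c x y.
have [a0|a_pos] := eqVneq (count_mem n (leaves a)) 0.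
  rewrite a0 in count_n; rewrite !(meval_set_var_notin _ _ a0).
  by move/(_ c x y): (IHb count_n) => /= ->; rewrite bmulDr bmulZr.
have b0 : count_mem n (leaves b) = 0.
  by move: a_pos count_n; case: (count_mem n (leaves a)) => [|[|k]] //= _ [].
rewrite b0 addn0 in count_n; rewrite !(meval_set_var_notin _ _ b0).
by move/(_ c x y): (IHa count_n) => /= ->; rewrite bmulDl bmulZl.
Qed.

Lemma linear_eval w n f :
  all (fun p => count_mem n (leaves p.2) == 1) f -> linear (fun x => eval (set_var w n x) f).
Proof.
move=> /allP once c x y; rewrite /eval scaler_sumr -big_split.
apply: eq_big_seq => p /once /eqP /linear_meval ->.
by rewrite scalerDr !scalerA mulrC.
Qed.

Lemma eval_cat w f g : eval w (f ++ g) = eval w f + eval w g.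
Proof. by rewrite /eval big_cat. Qed.

Lemma eval_pscale w c f : eval w (pscale c f) = c *: eval w f.
Proof. by rewrite /eval big_map scaler_sumr; apply: eq_bigr => p _; rewrite scalerA. Qed.

Lemma eval_pmul w f g : eval w (pmul f g) = bmul (eval w f) (eval w g).
Proof.
rewrite /eval /pmul big_allpairs_dep bmul_suml; apply: eq_bigr => p _.
rewrite bmulZl bmul_sumr scaler_sumr; apply: eq_bigr => q _.
by rewrite bmulZr scalerA.
Qed.

Lemma eval_flatten w f (h : term -> napoly K) :
  eval w (flatten [seq pscale p.1 (h p.2) | p <- f]) = \sum_(p <- f) p.1 *: eval w (h p.2).
Proof.
elim: f => [|p f IH]; first by rewrite /eval !big_nil.
by rewrite /= eval_cat IH eval_pscale big_cons.
Qed.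

Lemma eval_psubst w sigma f :
  eval w (psubst sigma f) = eval (fun n => eval w (sigma n)) f.
Proof.
rewrite /psubst eval_flatten; apply: eq_bigr => p _; congr (_ *: _).
by elim: p.2 => [n|a IHa b IHb] //=; rewrite eval_pmul IHa IHb.
Qed.

Lemma eval_coef w f (S : seq term) :
  uniq S -> {subset [seq p.2 | p <- f] <= S} ->
  eval w f = \sum_(t <- S) coef f t *: meval w t.
Proof.
move=> uS; elim: f => [|p f IH] sub.
  by rewrite /eval big_nil big1 // => t _; rewrite coef_pnil scale0r.
have pS : p.2 \in S by apply: sub; rewrite mem_head.
rewrite /eval big_cons -/(eval w f) IH => [|x x_in]; last by apply: sub; rewrite inE x_in orbT.
under [RHS]eq_bigr do rewrite coef_pcons scalerDl.
rewrite big_split /=; congr (_ + _).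
rewrite (big_rem _ pS) /= eqxx big1_seq ?addr0 // => t /andP[_ t_in].
rewrite (negbTE (_ : p.2 != t)) ?scale0r //; apply: contraTneq t_in => <-.
by rewrite mem_rem_uniqF.
Qed.

Lemma eval_peq w f g : peq f g -> eval w f = eval w g.
Proof.
move=> fg; pose S := undup [seq p.2 | p <- f ++ g].
have sub (h : napoly K) : {subset [seq p.2 | p <- h] <= [seq p.2 | p <- f ++ g]} ->
             {subset [seq p.2 | p <- h] <= S} by move=> hS x /hS; rewrite mem_undup.
rewrite (eval_coef w (undup_uniq _) (sub f _)) ?(eval_coef w (undup_uniq _) (sub g _)).
- by apply: eq_bigr => t _; rewrite fg.
- by move=> x; rewrite map_cat mem_cat => ->; rewrite orbT.
- by move=> x; rewrite map_cat mem_cat => ->.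
Qed.

Lemma eval_Tideal gens g :
  (forall h w, h \in gens -> eval w h = 0) -> Tideal gens g -> forall w, eval w g = 0.
Proof.
move=> gens0; elim=> {g} [g g_in w| w | f g _ IH fg w | f g _ IHf _ IHg w
  | c f _ IH w | h f _ IH w | h f _ IH w | sigma f _ IH w].
- exact: gens0.
- by rewrite /eval big_nil.
- by rewrite -(eval_peq w fg) IH.
- by rewrite /padd eval_cat IHf IHg addr0.
- by rewrite eval_pscale IH scaler0.
- by rewrite eval_pmul IH bmul0r.
- by rewrite eval_pmul IH bmul0l.
- by rewrite eval_psubst IH.
Qed.

Fixpoint meval_ac w (t : term) : V :=
  match t with
  | Var n => w n
  | Mul a b => let x := meval_ac w a in let y := meval_ac w b in bmul x y + bmul y x
  end.

Lemma eval_peval_anti w f :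
  eval w (peval_anti (@pvar K) f) = \sum_(p <- f) p.1 *: meval_ac w p.2.
Proof.
rewrite /peval_anti eval_flatten; apply: eq_bigr => p _; congr (_ *: _).
elim: p.2 => [n|a IHa b IHb] /=; first by rewrite /eval big_seq1 scale1r.
by rewrite /panti /padd eval_cat !eval_pmul IHa IHb.
Qed.

Lemma meval_ac_rename w r t : meval_ac w (rename r t) = meval_ac (w \o r) t.
Proof. by elim: t => [n|a IHa b IHb] //=; rewrite IHa IHb. Qed.

Lemma eq_in_meval_ac w w' t : {in leaves t, w =1 w'} -> meval_ac w t = meval_ac w' t.
Proof.
elim: t => [n|a IHa b IHb] /= eq_w; first by rewrite eq_w ?mem_head.
by rewrite IHa ?IHb // => x x_in; apply: eq_w; rewrite mem_cat x_in ?orbT.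
Qed.

Lemma meval_ac_eq0 w t i : i \in leaves t -> w i = 0 -> meval_ac w t = 0.
Proof.
move=> + wi0; elim: t => [n|a IHa b IHb] /=; first by rewrite inE => /eqP <-.
by rewrite mem_cat => /orP[/IHa|/IHb] ->; rewrite bmul0l bmul0r addr0.
Qed.

End Evaluation.

Local Open Scope Z_scope.

Definition zvec := seq (N * Z).

Fixpoint coefZ (u : zvec) (l : N) : Z :=
  if u is p :: u' then (if N.eqb p.1 l then p.2 else 0) + coefZ u' l else 0.

Fixpoint insZ (l : N) (c : Z) (u : zvec) : zvec :=
  match u with
  | [::] => [:: (l, c)]
  | p :: u' =>
      if N.eqb l p.1 then (l, c + p.2) :: u'
      else if N.ltb l p.1 then (l, c) :: u else p :: insZ l c u'
  end.

Definition normZ (u : zvec) : zvec :=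
  [seq p <- foldr (fun p acc => insZ p.1 p.2 acc) [::] u | negb (Z.eqb p.2 0)].

Definition addZ (u v : zvec) : zvec := normZ (u ++ v).
Definition scaleZ (c : Z) (u : zvec) : zvec := [seq (p.1, c * p.2) | p <- u].
Definition eZ (i : N) : zvec := [:: (i, 1)].

Lemma coefZ_cat u v l : coefZ (u ++ v) l = coefZ u l + coefZ v l.
Proof. by elim: u => [|p u IH] //=; rewrite IH Z.add_assoc. Qed.

Lemma coefZ_scale c u l : coefZ (scaleZ c u) l = c * coefZ u l.
Proof. by elim: u => [|p u IH] /=; [lia | case: N.eqb; rewrite IH; lia]. Qed.

Lemma coefZ_ins m c u l :
  coefZ (insZ m c u) l = (if N.eqb m l then c else 0) + coefZ u l.
Proof.
elim: u => [|p u IH] /=; first by lia.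
case: (N.eqb_spec m p.1) => [<-|_] /=; first by case: N.eqb; lia.
case: N.ltb => /=; last rewrite IH; by case: (N.eqb m l); case: (N.eqb p.1 l); lia.
Qed.

Lemma coefZ_norm u l : coefZ (normZ u) l = coefZ u l.
Proof.
have coefZ_filter w : coefZ [seq p <- w | negb (Z.eqb p.2 0)] l = coefZ w l.
  by elim: w => [|p w IH] //=; case: (Z.eqb_spec p.2 0) => [->|_] /=; rewrite IH //; case: N.eqb.
rewrite /normZ coefZ_filter; elim: u => [|p u IH] //=.
by rewrite coefZ_ins IH; case: N.eqb.
Qed.

Definition dimB : N := 93.
Definition nB : nat := N.to_nat dimB.

(* Structure constants of the algebra B with basis e_0, ..., e_92: an entry (i, j, [:: (k, c); ...])
   says e_i e_j = sum c e_k, and products not listed vanish. B is generated by e_0, ..., e_3, and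
   every other e_k is a product of distinct generators: e_4 ... e_15 have degree 2, e_16 ... e_47
   degree 3, e_48 ... e_92 degree 4; a product in which a generator occurs twice is 0. *)

Definition struct_table : seq (Z * Z * seq (Z * Z)) := [::
  (0, 1, [:: (4, 1)]);
  (0, 2, [:: (6, 1)]);
  (0, 3, [:: (8, 1)]);
  (0, 10, [:: (16, 1)]);
  (0, 11, [:: (17, 1)]);
  (0, 12, [:: (24, 1)]);
  (0, 13, [:: (25, 1)]);
  (0, 14, [:: (32, 1)]);
  (0, 15, [:: (33, 1)]);
  (0, 40, [:: (48, 1)]);
  (0, 41, [:: (49, 1)]);
  (0, 42, [:: (50, 1)]);
  (0, 43, [:: (51, 1)]);
  (0, 44, [:: (52, 1)]);
  (0, 45, [:: (63, 1)]);
  (0, 46, [:: (64, 1)]);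
  (0, 47, [:: (65, 1)]);
  (1, 0, [:: (5, 1)]);
  (1, 2, [:: (10, 1)]);
  (1, 3, [:: (12, 1)]);
  (1, 6, [:: (18, 1)]);
  (1, 7, [:: (19, 1)]);
  (1, 8, [:: (26, 1)]);
  (1, 9, [:: (27, 1)]);
  (1, 14, [:: (40, 1)]);
  (1, 15, [:: (41, 1)]);
  (1, 32, [:: (53, 1)]);
  (1, 33, [:: (54, 1)]);
  (1, 34, [:: (55, 1)]);
  (1, 35, [:: (56, 1)]);
  (1, 36, [:: (57, 1)]);
  (1, 37, [:: (66, 1)]);
  (1, 38, [:: (67, 1)]);
  (1, 39, [:: (68, 1)]);
  (2, 0, [:: (7, 1)]);
  (2, 1, [:: (11, 1)]);
  (2, 3, [:: (14, 1)]);
  (2, 4, [:: (20, 1)]);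
  (2, 5, [:: (19, 1); (16, 1); (18, -1); (17, -1); (20, 1)]);
  (2, 8, [:: (34, 1)]);
  (2, 9, [:: (35, 1)]);
  (2, 12, [:: (42, 1)]);
  (2, 13, [:: (43, 1)]);
  (2, 24, [:: (58, 1)]);
  (2, 25, [:: (59, 1)]);
  (2, 26, [:: (55, 1); (53, -1); (58, 1); (48, 1); (50, -1)]);
  (2, 27, [:: (60, 1)]);
  (2, 28, [:: (61, 1)]);
  (2, 29, [:: (69, 1)]);
  (2, 30, [:: (70, 1)]);
  (2, 31, [:: (71, 1)]);
  (3, 0, [:: (9, 1)]);
  (3, 1, [:: (13, 1)]);
  (3, 2, [:: (15, 1)]);
  (3, 4, [:: (28, 1)]);
  (3, 5, [:: (27, 1); (24, 1); (26, -1); (25, -1); (28, 1)]);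
  (3, 6, [:: (36, 1)]);
  (3, 7, [:: (35, 1); (32, 1); (34, -1); (33, -1); (36, 1)]);
  (3, 10, [:: (44, 1)]);
  (3, 11, [:: (43, 1); (40, 1); (42, -1); (41, -1); (44, 1)]);
  (3, 16, [:: (62, 1)]);
  (3, 17, [:: (59, -1); (61, 1); (56, 1); (60, -1); (51, 1); (48, 2); (49, -1); (57, -1); (54, 1); (50, -2); (62, 1); (53, -1); (58, 1)]);
  (3, 18, [:: (49, 1); (57, 1); (54, -1); (62, 1); (52, -1)]);
  (3, 19, [:: (53, 2); (54, -2); (58, 1); (49, 2); (59, -2); (57, 1); (52, -2); (61, 1); (55, -2); (56, 1); (51, 1); (62, 1); (48, -1)]);
  (3, 20, [:: (53, -1); (61, 2); (58, 1); (59, -2); (52, -1); (56, 1); (60, -1); (51, 1); (48, 1); (57, -1); (54, 1); (50, -1); (62, 1)]);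
  (3, 21, [:: (72, 1)]);
  (3, 22, [:: (73, 1)]);
  (3, 23, [:: (74, 1)]);
  (4, 2, [:: (21, 1)]);
  (4, 3, [:: (29, 1)]);
  (4, 14, [:: (75, 1)]);
  (4, 15, [:: (72, 1); (69, -1); (75, 1); (53, 1); (58, -1); (59, 2); (52, 1); (61, -1); (56, -1); (60, 1); (51, -1); (48, -1); (57, 1); (54, -1); (50, 1); (62, -1)]);
  (5, 2, [:: (21, 1); (16, -1); (18, 1)]);
  (5, 3, [:: (29, 1); (24, -1); (26, 1)]);
  (5, 14, [:: (75, 1); (48, -1); (53, 1)]);
  (5, 15, [:: (49, -1); (72, 1); (69, -1); (75, 1); (53, 1); (58, -1); (59, 2); (52, 1); (61, -1); (56, -1); (60, 1); (51, -1); (48, -1); (57, 1); (50, 1); (62, -1)]);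
  (6, 1, [:: (22, 1)]);
  (6, 3, [:: (37, 1)]);
  (6, 12, [:: (76, 1)]);
  (6, 13, [:: (73, 1); (66, -1); (76, 1); (49, -1); (54, 1); (62, -1); (52, 1)]);
  (7, 1, [:: (22, 1); (17, -1); (20, 1)]);
  (7, 3, [:: (37, 1); (32, -1); (34, 1)]);
  (7, 12, [:: (76, 1); (50, -1); (58, 1)]);
  (7, 13, [:: (51, -1); (59, 1); (73, 1); (66, -1); (76, 1); (49, -1); (54, 1); (62, -1); (52, 1)]);
  (8, 1, [:: (30, 1)]);
  (8, 2, [:: (38, 1)]);
  (8, 10, [:: (77, 1)]);
  (8, 11, [:: (70, 1); (67, -1); (77, 1); (53, 1); (58, -1); (48, -1); (50, 1)]);
  (9, 1, [:: (30, 1); (25, -1); (28, 1)]);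
  (9, 2, [:: (38, 1); (33, -1); (36, 1)]);
  (9, 10, [:: (77, 1); (52, -1); (62, 1)]);
  (9, 11, [:: (70, 1); (67, -1); (77, 1); (52, -1); (59, -1); (61, 1); (56, 1); (60, -1); (57, -1); (54, 1); (62, 1)]);
  (10, 0, [:: (23, 1)]);
  (10, 3, [:: (45, 1)]);
  (10, 8, [:: (78, 1)]);
  (10, 9, [:: (74, 1); (52, 1); (62, -1); (63, -1); (78, 1)]);
  (11, 0, [:: (23, 1); (16, 1); (18, -1); (17, -1); (20, 1)]);
  (11, 3, [:: (45, 1); (40, -1); (42, 1)]);
  (11, 8, [:: (78, 1); (53, -1); (58, 1); (48, 1); (50, -1)]);
  (11, 9, [:: (56, -1); (60, 1); (74, 1); (52, 1); (62, -1); (63, -1); (78, 1)]);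
  (12, 0, [:: (31, 1)]);
  (12, 2, [:: (46, 1)]);
  (12, 6, [:: (79, 1)]);
  (12, 7, [:: (71, 1); (50, 1); (58, -1); (64, -1); (79, 1)]);
  (13, 0, [:: (31, 1); (24, 1); (26, -1); (25, -1); (28, 1)]);
  (13, 2, [:: (46, 1); (41, -1); (44, 1)]);
  (13, 6, [:: (79, 1); (49, 1); (54, -1); (62, 1); (52, -1)]);
  (13, 7, [:: (71, 1); (64, -1); (79, 1); (49, 2); (59, -2); (54, -1); (52, -2); (61, 1); (51, 1); (62, 1); (55, -1); (53, 1); (48, -1); (50, 1)]);
  (14, 0, [:: (39, 1)]);
  (14, 1, [:: (47, 1)]);
  (14, 4, [:: (80, 1)]);
  (14, 5, [:: (68, 1); (48, 1); (53, -1); (65, -1); (80, 1)]);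
  (15, 0, [:: (39, 1); (32, 1); (34, -1); (33, -1); (36, 1)]);
  (15, 1, [:: (47, 1); (40, 1); (42, -1); (41, -1); (44, 1)]);
  (15, 4, [:: (80, 1); (53, -1); (58, 1); (59, -2); (52, -1); (61, 1); (56, 1); (60, -1); (51, 1); (48, 1); (57, -1); (54, 1); (50, -1); (62, 1)]);
  (15, 5, [:: (68, 1); (65, -1); (80, 1); (54, -1); (49, 2); (52, -2); (58, 1); (59, -2); (61, 1); (55, -1); (56, 1); (60, -1); (51, 1); (62, 1)]);
  (16, 3, [:: (81, 1)]);
  (17, 3, [:: (83, 1)]);
  (18, 3, [:: (87, 1)]);
  (19, 3, [:: (81, -2); (83, 1); (48, 2); (50, -1); (53, -2); (87, 2); (55, 1)]);
  (20, 3, [:: (83, 2); (87, 1); (50, -2); (58, 1); (53, -1); (81, -2); (48, 2)]);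
  (21, 3, [:: (69, -1); (75, 1); (83, 2); (87, 1); (50, -2); (58, 1); (53, -1); (81, -2); (48, 2)]);
  (22, 3, [:: (87, 1); (66, -1); (76, 1)]);
  (23, 3, [:: (81, 1); (63, -1); (78, 1)]);
  (24, 2, [:: (82, 1)]);
  (25, 2, [:: (85, 1)]);
  (26, 2, [:: (88, 1)]);
  (27, 2, [:: (82, -2); (88, 2); (85, 1); (49, 2); (52, -1); (54, -2); (57, 1)]);
  (28, 2, [:: (85, 2); (88, 1); (52, -2); (54, -1); (62, 1); (82, -2); (49, 2)]);
  (29, 2, [:: (69, -1); (75, 1); (53, 1); (58, -1); (59, 2); (52, -1); (61, -1); (56, -1); (60, 1); (51, -1); (48, -1); (57, 1); (54, -2); (50, 1); (85, 2); (88, 1); (82, -2); (49, 2)]);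
  (30, 2, [:: (88, 1); (67, -1); (77, 1)]);
  (31, 2, [:: (82, 1); (64, -1); (79, 1)]);
  (32, 1, [:: (84, 1)]);
  (33, 1, [:: (86, 1)]);
  (34, 1, [:: (91, 1)]);
  (35, 1, [:: (91, 2); (49, 1); (84, -2); (86, 1); (59, -2); (52, -1); (61, 1); (51, 1); (48, -1); (50, 1)]);
  (36, 1, [:: (86, 2); (91, 1); (52, -2); (49, 1); (58, 1); (59, -2); (53, -1); (84, -2); (61, 1); (56, 1); (60, -1); (51, 1); (57, -1); (54, 1); (62, 1)]);
  (37, 1, [:: (66, -1); (76, 1); (86, 2); (91, 1); (52, -1); (58, 1); (59, -2); (53, -1); (84, -2); (54, 2); (61, 1); (56, 1); (60, -1); (51, 1); (57, -1)]);
  (38, 1, [:: (91, 1); (67, -1); (77, 1); (53, 1); (58, -1); (48, -1); (50, 1)]);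
  (39, 1, [:: (84, 1); (65, -1); (80, 1)]);
  (40, 0, [:: (89, 1)]);
  (41, 0, [:: (90, 1)]);
  (42, 0, [:: (92, 1)]);
  (43, 0, [:: (89, -2); (48, -1); (90, 1); (50, 1); (92, 2); (59, -1); (61, 1); (56, 1); (60, -1); (57, -1); (54, 1)]);
  (44, 0, [:: (90, 2); (92, 1); (89, -2); (48, -1); (49, 2); (52, -2); (58, 1); (59, -2); (61, 1); (56, 1); (60, -1); (51, 1); (57, -1); (62, 1)]);
  (45, 0, [:: (63, -1); (78, 1); (90, 2); (92, 1); (89, -2); (48, -1); (49, 2); (58, 1); (59, -2); (52, -1); (61, 1); (56, 1); (60, -1); (51, 1); (57, -1)]);
  (46, 0, [:: (92, 1); (50, 1); (58, -1); (64, -1); (79, 1)]);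
  (47, 0, [:: (89, 1); (48, 1); (53, -1); (65, -1); (80, 1)])].

Definition zvec_of (s : seq (Z * Z)) : zvec := [seq (Z.to_N p.1, p.2) | p <- s].

Definition struct_map : PositiveMap.t (PositiveMap.t zvec) :=
  let pos z := Pos.of_succ_nat (Z.to_nat z) in
  foldr (fun e m =>
    let row := odflt (PositiveMap.empty _) (PositiveMap.find (pos e.1.1) m) in
    PositiveMap.add (pos e.1.1) (PositiveMap.add (pos e.1.2) (zvec_of e.2) row) m)
  (PositiveMap.empty _) struct_table.

(* The table is a parameter so that a check evaluates [struct_map] only once. *)
Section StructureConstants.
Variable M : PositiveMap.t (PositiveMap.t zvec).

Definition sconst (i j : N) : zvec :=
  if N.ltb i dimB && N.ltb j dimB then
    if PositiveMap.find (N.succ_pos i) M is Some row then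
      odflt [::] (PositiveMap.find (N.succ_pos j) row)
    else [::]
  else [::].

Definition mulZ (u v : zvec) : zvec :=
  normZ (flatten [seq scaleZ (p.2 * r.2) (sconst p.1 r.1) | p <- u, r <- v]).

Fixpoint mevalZ (w : nat -> zvec) (t : term) : zvec :=
  match t with Var n => w n | Mul a b => mulZ (mevalZ w a) (mevalZ w b) end.

Definition evalZ (w : nat -> zvec) (f : seq (Z * term)) : zvec :=
  normZ (flatten [seq scaleZ p.1 (mevalZ w p.2) | p <- f]).

Definition basis_index := [seq N.of_nat i | i <- iota 0%N nB].

Definition holds_on_basis (f : seq (Z * term)) : bool :=
  all (fun i => all (fun j => all (fun k =>
    nilp (evalZ (nth [::] [:: eZ i; eZ j; eZ k]) f))
    basis_index) basis_index) basis_index.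

Fixpoint mevalZ_ac (w : nat -> zvec) (t : term) : zvec :=
  match t with
  | Var n => w n
  | Mul a b => let x := mevalZ_ac w a in let y := mevalZ_ac w b in addZ (mulZ x y) (mulZ y x)
  end.

End StructureConstants.

Definition lsymZ : seq (Z * term) :=
  [:: (1, Mul (Mul x0 x1) x2); (-1, Mul x0 (Mul x1 x2));
      (-1, Mul (Mul x1 x0) x2); (1, Mul x1 (Mul x0 x2))].

Definition B1Z : seq (Z * term) :=
  [:: (1, Mul (Mul x0 x1) x2); (-1, Mul (Mul x1 x0) x2);
      (-1, Mul (Mul x0 x2) x1); (1, Mul (Mul x2 x0) x1);
      (1, Mul (Mul x1 x2) x0); (-1, Mul (Mul x2 x1) x0)].

Lemma model_identities : holds_on_basis struct_map lsymZ && holds_on_basis struct_map B1Z.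
Proof. vm_cast_no_check (erefl true). Qed.

(* For each shape of monomial of degree at most 4 (all variables renamed to 0), the coordinates
   of a linear form on B. *)
Definition detector_table : seq (term * seq (Z * Z)) := [::
  ((Var 0), [:: (0, 1)]);
  ((Mul (Var 0) (Var 0)), [:: (4, 1)]);
  ((Mul (Var 0) (Mul (Var 0) (Var 0))), [:: (16, 1)]);
  ((Mul (Mul (Var 0) (Var 0)) (Var 0)), [:: (16, -1); (17, -2); (18, -2)]);
  ((Mul (Var 0) (Mul (Var 0) (Mul (Var 0) (Var 0)))), [:: (48, 3); (49, 11); (51, 22); (52, 8); (54, 8); (55, 3); (57, 11); (58, -2); (59, 9); (62, -2); (63, -6); (64, -6)]);
  ((Mul (Var 0) (Mul (Mul (Var 0) (Var 0)) (Var 0))), [:: (48, -4); (49, 5); (50, -4); (51, 5); (52, 5); (54, 1); (55, -1); (59, 1)]);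
  ((Mul (Mul (Var 0) (Var 0)) (Mul (Var 0) (Var 0))), [:: (48, -12); (49, 7); (50, -12); (51, 71); (52, 7); (53, -24); (54, -5); (55, -3); (57, 16); (58, -16); (59, 27); (62, -16); (63, -24); (64, -24); (65, -24)]);
  ((Mul (Mul (Var 0) (Mul (Var 0) (Var 0))) (Var 0)), [:: (48, -16); (49, -1); (50, -16); (51, -1); (52, 5); (53, -18); (54, 1); (55, -1); (58, -18); (59, 1); (62, 24); (64, -12); (65, -12)]);
  ((Mul (Mul (Mul (Var 0) (Var 0)) (Var 0)) (Var 0)), [:: (48, 4); (49, -13); (50, -4); (51, 11); (52, -17); (53, 4); (54, -13); (55, -3); (57, -16); (58, -4); (59, 3); (62, -16)])].

Definition detector (s : term) : zvec :=
  if [seq e <- detector_table | e.1 == rename (fun=> 0%N) s] is e :: _ then zvec_of e.2 else [::].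

Fixpoint dotZ (phi u : zvec) : Z :=
  if phi is p :: phi' then p.2 * coefZ u p.1 + dotZ phi' u else 0.

Definition gen_sum (s : term) (q : nat) : zvec :=
  [seq (N.of_nat p, 1) | p <- iota 0 (deg s) & nth 0%N (leaves s) p == q].

Definition detects (M : PositiveMap.t (PositiveMap.t zvec)) (s : term) : bool :=
  let value t := dotZ (detector s) (mevalZ_ac M (gen_sum s) t) in
  (value s != 0) &&
  all (fun t => value t == if comm_eqb t s then value s else 0) (trees_le (undup (leaves s)) 4%N).

Lemma model_detectors :
  all (fun e => all (fun p => N.ltb (Z.to_N p.1) dimB) e.2) detector_table &&
  all (fun s => normalized s ==> detects struct_map s) (trees_le (iota 0 4) 4%N).
Proof. vm_cast_no_check (erefl true). Qed.

Lemma detects_canon s : (deg s <= 4)%N -> detects struct_map (canon s).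
Proof.
move=> deg_s; have /andP[_ /allP detect] := model_detectors.
apply: (implyP (detect _ _)); last by rewrite /normalized canon_idem.
apply: mem_trees_le; first by rewrite /canon deg_rename.
by move=> x /leaves_canon x_lt; rewrite mem_iota /=; apply: leq_trans deg_s.
Qed.

Local Close Scope Z_scope.

Section Model.
Variable K : fieldType.

Definition zcast (z : Z) : K := (int_of_Z z)%:~R.

Lemma zcast0 : zcast 0 = 0.
Proof. by []. Qed.

Lemma zcastD a b : zcast (a + b)%Z = zcast a + zcast b.
Proof. by rewrite /zcast (rmorphD int_of_Z) intrD. Qed.

Lemma zcastM a b : zcast (a * b)%Z = zcast a * zcast b.
Proof. by rewrite /zcast (rmorphM int_of_Z) intrM. Qed.

Lemma zcast_neq0 z : [pchar K] =i pred0 -> z != 0%Z -> zcast z != 0.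
Proof.
move=> charK0 z_neq0.
have : int_of_Z z != 0 by apply: contra z_neq0 => /eqP iz0; rewrite -[z]int_of_ZK iz0.
have natr_eq0 := (pcharf0P K).1 charK0.
by rewrite /zcast; case: (int_of_Z z) => n; rewrite ?NegzE ?mulrNz ?oppr_eq0 /= natr_eq0.
Qed.

Local Notation sconstB := (sconst struct_map).

Definition vecB := {ffun 'I_nB -> K^o}.
Implicit Types (u v : vecB) (x y : zvec).

Lemma scale_regularE a (x : K^o) : a *: x = a * x.
Proof. by []. Qed.

Definition embZ x : vecB := [ffun l : 'I_nB => zcast (coefZ x (N.of_nat l))].
Definition basisB (i : 'I_nB) : vecB := embZ (eZ (N.of_nat i)).

Definition mulB u v : vecB :=
  \sum_(i < nB) \sum_(j < nB) (u i * v j) *: embZ (sconstB (N.of_nat i) (N.of_nat j)).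

Lemma embZ_cat x y : embZ (x ++ y) = embZ x + embZ y.
Proof. by apply/ffunP=> l; rewrite !ffunE coefZ_cat zcastD. Qed.

Lemma embZ_norm x : embZ (normZ x) = embZ x.
Proof. by apply/ffunP=> l; rewrite !ffunE coefZ_norm. Qed.

Lemma embZ_add x y : embZ (addZ x y) = embZ x + embZ y.
Proof. by rewrite embZ_norm embZ_cat. Qed.

Lemma embZ_scale c x : embZ (scaleZ c x) = zcast c *: embZ x.
Proof. by apply/ffunP=> l; rewrite !ffunE coefZ_scale zcastM. Qed.

Lemma embZ_nil : embZ [::] = 0.
Proof. by apply/ffunP=> l; rewrite !ffunE. Qed.

Lemma mulBDl u u' v : mulB (u + u') v = mulB u v + mulB u' v.
Proof.
rewrite /mulB -big_split; apply: eq_bigr => i _; rewrite -big_split; apply: eq_bigr => j _.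
by rewrite ffunE mulrDl scalerDl.
Qed.

Lemma mulBDr u v v' : mulB u (v + v') = mulB u v + mulB u v'.
Proof.
rewrite /mulB -big_split; apply: eq_bigr => i _; rewrite -big_split; apply: eq_bigr => j _.
by rewrite ffunE mulrDr scalerDl.
Qed.

Lemma mulBZl a u v : mulB (a *: u) v = a *: mulB u v.
Proof.
rewrite /mulB scaler_sumr; apply: eq_bigr => i _; rewrite scaler_sumr; apply: eq_bigr => j _.
by rewrite ffunE scalerA mulrA.
Qed.

Lemma mulBZr a u v : mulB u (a *: v) = a *: mulB u v.
Proof.
rewrite /mulB scaler_sumr; apply: eq_bigr => i _; rewrite scaler_sumr; apply: eq_bigr => j _.
by rewrite ffunE scalerA mulrCA.
Qed.

Lemma sum_ord_eqb (m : N) (a : K) (G : N -> K) :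
  \sum_(i < nB) (if N.eqb m (N.of_nat i) then a * G (N.of_nat i) else 0) =
  if N.ltb m dimB then a * G m else 0.
Proof.
case: (N.ltb_spec m dimB) => [m_lt | m_ge]; last first.
  rewrite big1 // => i _; case: (N.eqb_spec m (N.of_nat i)) => // m_i.
  by move: (ltn_ord i) m_i; rewrite /nB; move: (nat_of_ord i) => k; lia.
have m_lt' : (N.to_nat m < nB)%N by rewrite /nB; lia.
rewrite (bigD1 (Ordinal m_lt')) //= N2Nat.id N.eqb_refl big1 ?addr0 // => i /eqP i_neq.
case: (N.eqb_spec m (N.of_nat i)) => // m_i; case: i_neq; apply: val_inj.
by rewrite /= m_i Nat2N.id.
Qed.

Lemma sum_zvec x (G : N -> K) :
  (forall p, p \in x -> ~~ N.ltb p.1 dimB -> G p.1 = 0) ->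
  \sum_(p <- x) zcast p.2 * G p.1 = \sum_(i < nB) zcast (coefZ x (N.of_nat i)) * G (N.of_nat i).
Proof.
elim: x => [|p x IH] G0 /=; first by rewrite big_nil big1 // => i _; rewrite zcast0 mul0r.
rewrite big_cons IH => [|q q_in]; last by apply: G0; rewrite inE q_in orbT.
under [RHS]eq_bigr do rewrite zcastD mulrDl.
rewrite big_split /=; congr (_ + _).
under [RHS]eq_bigr do rewrite (fun_if zcast) zcast0 (fun_if (fun c => c * _)) mul0r.
by rewrite sum_ord_eqb; case: ifPn => // /(G0 p (mem_head _ _)) ->; rewrite mulr0.
Qed.

Lemma sconst_out i j : ~~ N.ltb i dimB || ~~ N.ltb j dimB -> sconstB i j = [::].
Proof. by rewrite /sconst; case: N.ltb; case: N.ltb. Qed.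

Lemma zcast_coef_mulZ x y l :
  zcast (coefZ (mulZ struct_map x y) l) =
  \sum_(p <- x) \sum_(r <- y) zcast p.2 * zcast r.2 * zcast (coefZ (sconstB p.1 r.1) l).
Proof.
rewrite /mulZ coefZ_norm; elim: x => [|p x IH]; first by rewrite big_nil.
rewrite big_cons -IH /= flatten_cat coefZ_cat zcastD; congr (_ + _); clear IH.
elim: y => [|r y IHy]; first by rewrite big_nil.
by rewrite big_cons -IHy /= coefZ_cat zcastD coefZ_scale !zcastM.
Qed.

Lemma mulB_embZ x y : mulB (embZ x) (embZ y) = embZ (mulZ struct_map x y).
Proof.
apply/ffunP=> l; rewrite /mulB sum_ffunE [RHS]ffunE zcast_coef_mulZ.
under eq_bigr do rewrite sum_ffunE.
transitivity (\sum_(p <- x) zcast p.2 *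
   \sum_(r <- y) zcast r.2 * zcast (coefZ (sconstB p.1 r.1) (N.of_nat l))); last first.
  by apply: eq_bigr => p _; rewrite mulr_sumr; apply: eq_bigr => r _; rewrite mulrA.
rewrite (sum_zvec (G := fun i =>
  \sum_(r <- y) zcast r.2 * zcast (coefZ (sconstB i r.1) (N.of_nat l)))) => [|p _ p_ge]; last first.
  by rewrite big1 // => r _; rewrite sconst_out ?p_ge // zcast0 mulr0.
apply: eq_bigr => i _.
rewrite (sum_zvec (G := fun j => zcast (coefZ (sconstB (N.of_nat i) j) (N.of_nat l)))) => [|r _ r_ge].
  by rewrite mulr_sumr; apply: eq_bigr => j _; rewrite !ffunE mulrA.
by rewrite sconst_out ?r_ge ?orbT.
Qed.

Lemma vecB_basis u : u = \sum_(i < nB) u i *: basisB i.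
Proof.
apply/ffunP=> l; rewrite sum_ffunE (bigD1 l) //= big1 ?addr0 => [|i /negbTE i_neq].
  by rewrite !ffunE /= N.eqb_refl scale_regularE mulr1.
rewrite !ffunE /= scale_regularE; case: (N.eqb_spec _ _) => [/Nat2N.inj /val_inj il|_].
  by rewrite il eqxx in i_neq.
by rewrite zcast0 mulr0.
Qed.

Lemma linear_basisB_eq0 (W : lmodType K) (f : vecB -> W) :
  linear f -> (forall i, f (basisB i) = 0) -> forall u, f u = 0.
Proof.
move=> f_lin f_basis u.
have f0 : f 0 = 0.
  have := f_lin 1 0 0; rewrite !scale1r addr0 => /(congr1 (fun w : W => w - f 0)).
  by rewrite addrK subrr.
have fD v v' : f (v + v') = f v + f v' by rewrite -[v]scale1r f_lin !scale1r.
rewrite (vecB_basis u) (big_morph f fD f0) big1 // => i _.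
by rewrite -[_ *: _]addr0 f_lin f_basis f0 scaler0 addr0.
Qed.

Lemma trilinear_basisB_eq0 (W : lmodType K) (G : vecB -> vecB -> vecB -> W) :
  (forall v z, linear (G^~ v ^~ z)) -> (forall u z, linear (G u ^~ z)) ->
  (forall u v, linear (G u v)) ->
  (forall i j k, G (basisB i) (basisB j) (basisB k) = 0) -> forall u v z, G u v z = 0.
Proof.
move=> lin1 lin2 lin3 G_basis u v z.
apply: (linear_basisB_eq0 (lin1 v z)) => i; apply: (linear_basisB_eq0 (lin2 _ z)) => j.
by apply: (linear_basisB_eq0 (lin3 _ _)) => k; apply: G_basis.
Qed.

Lemma meval_embZ W t : meval mulB (embZ \o W) t = embZ (mevalZ struct_map W t).
Proof. by elim: t => [n|a IHa b IHb] //=; rewrite IHa IHb mulB_embZ. Qed.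

Lemma meval_ac_embZ W t : meval_ac mulB (embZ \o W) t = embZ (mevalZ_ac struct_map W t).
Proof. by elim: t => [n|a IHa b IHb] //=; rewrite IHa IHb embZ_add !mulB_embZ. Qed.

Definition zpoly (f : seq (Z * term)) : napoly K := [seq (zcast p.1, p.2) | p <- f].

Lemma eval_embZ W f : eval mulB (embZ \o W) (zpoly f) = embZ (evalZ struct_map W f).
Proof.
rewrite /evalZ embZ_norm /eval big_map; elim: f => [|p f IH]; first by rewrite big_nil embZ_nil.
by rewrite big_cons IH /= embZ_cat embZ_scale meval_embZ.
Qed.

Definition eval3 (f : seq (Z * term)) (u v z : vecB) : vecB :=
  eval mulB (nth 0 [:: u; v; z]) (zpoly f).

Definition multilinear3 (f : seq (Z * term)) : bool :=
  all (fun p => all (fun n => count_mem n (leaves p.2) == 1) (iota 0 3)) f.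

Lemma eval3_eq0 f : holds_on_basis struct_map f -> multilinear3 f ->
  forall u v z, eval3 f u v z = 0.
Proof.
move=> /allP f_basis f_lin.
have lin n (w : nat -> vecB) : (n < 3)%N ->
    linear (fun u => eval mulB (set_var w n u) (zpoly f)).
  move=> n_lt; apply: (linear_eval mulBDl mulBDr mulBZl mulBZr); rewrite /zpoly all_map.
  by apply/allP=> p /(allP f_lin) /allP /(_ n); rewrite mem_iota; apply.
have lin_eq (g g' : vecB -> vecB) : g =1 g' -> linear g' -> linear g.
  by move=> gg' g'_lin c u1 u2; rewrite !gg' g'_lin.
apply: trilinear_basisB_eq0 => [v z|u z|u v|i j k].
- by apply: (lin_eq _ _ _ (lin 0%N (nth 0 [:: 0; v; z]) isT)) => x; apply: eq_eval; case=> [|[|[|]]].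
- by apply: (lin_eq _ _ _ (lin 1%N (nth 0 [:: u; 0; z]) isT)) => x; apply: eq_eval; case=> [|[|[|]]].
- by apply: (lin_eq _ _ _ (lin 2%N (nth 0 [:: u; v; 0]) isT)) => x; apply: eq_eval; case=> [|[|[|]]].
have index_in (l : 'I_nB) : N.of_nat l \in basis_index by rewrite map_f // mem_iota ltn_ord.
move: f_basis => /(_ _ (index_in i)) /allP /(_ _ (index_in j)) /allP /(_ _ (index_in k)) /nilP f0.
pose W := nth [::] [:: eZ (N.of_nat i); eZ (N.of_nat j); eZ (N.of_nat k)].
rewrite /eval3 (eq_eval _ (w' := embZ \o W)); first by rewrite eval_embZ f0 embZ_nil.
by rewrite /W => -[|[|[|n]]] //=; rewrite !nth_nil embZ_nil.
Qed.

Lemma eval_mulB_lsym_id w : eval mulB w (lsym_id K) = 0.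
Proof.
have -> : eval mulB w (lsym_id K) = eval3 lsymZ (w 0%N) (w 1%N) (w 2%N).
  by rewrite /eval3 /eval !big_cons !big_nil.
by apply: eval3_eq0; first by case/andP: model_identities.
Qed.

Lemma eval_mulB_B1_id w : eval mulB w (B1_id K) = 0.
Proof.
have -> : eval mulB w (B1_id K) = eval3 B1Z (w 0%N) (w 1%N) (w 2%N).
  by rewrite /eval3 /eval !big_cons !big_nil.
by apply: eval3_eq0; first by case/andP: model_identities.
Qed.

Lemma eval_mulB_Tideal g :
  Tideal [:: lsym_id K; B1_id K] g -> forall w, eval mulB w g = 0.
Proof.
apply: (eval_Tideal mulBDl mulBDr mulBZl mulBZr) => h w.
by rewrite !inE => /orP[]/eqP ->; [apply: eval_mulB_lsym_id | apply: eval_mulB_B1_id].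
Qed.

Definition phiB (phi : zvec) (u : vecB) : K :=
  \sum_(l < nB) zcast (coefZ phi (N.of_nat l)) * u l.

Lemma phiB0 phi : phiB phi 0 = 0.
Proof. by rewrite /phiB big1 // => l _; rewrite ffunE mulr0. Qed.

Lemma phiB_sum phi (f : napoly K) (F : K * term -> vecB) :
  phiB phi (\sum_(p <- f) p.1 *: F p) = \sum_(p <- f) p.1 * phiB phi (F p).
Proof.
rewrite /phiB; under eq_bigr do rewrite sum_ffunE mulr_sumr.
rewrite exchange_big; apply: eq_bigr => p _; rewrite mulr_sumr.
by apply: eq_bigr => l _; rewrite ffunE scale_regularE mulrCA.
Qed.

Lemma phiB_embZ phi x :
  all (fun p => N.ltb p.1 dimB) phi -> phiB phi (embZ x) = zcast (dotZ phi x).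
Proof.
move=> /allP phi_lt.
have -> : zcast (dotZ phi x) = \sum_(p <- phi) zcast p.2 * zcast (coefZ x p.1).
  by elim: (phi) => [|p phi' IH] /=; rewrite ?big_nil ?big_cons ?zcastD ?zcastM ?IH.
rewrite (sum_zvec (G := fun i => zcast (coefZ x i))) => [|p /phi_lt ->] //.
by apply: eq_bigr => l _; rewrite ffunE.
Qed.

Lemma detector_lt s : all (fun p => N.ltb p.1 dimB) (detector s).
Proof.
have /andP[/allP table_lt _] := model_detectors.
rewrite /detector; case E: [seq e <- detector_table | _] => [//|e es].
have /table_lt : e \in detector_table.
  by have := mem_head e es; rewrite -E mem_filter => /andP[].
by rewrite all_map.
Qed.

Hypothesis charK0 : [pchar K] =i pred0.

Lemma detector_separates s : detects struct_map s ->
  exists2 k : K, k != 0 & forall t, (deg t <= 4)%N -> {subset leaves t <= leaves s} ->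
    phiB (detector s) (meval_ac mulB (embZ \o gen_sum s) t) = if comm_eqb t s then k else 0.
Proof.
rewrite /detects /= => /andP[value_s /allP value_t].
eexists; first exact: zcast_neq0 value_s.
move=> t deg_t sub_t; rewrite meval_ac_embZ phiB_embZ ?detector_lt //.
have /value_t/eqP -> : t \in trees_le (undup (leaves s)) 4.
  by apply: mem_trees_le => // x /sub_t; rewrite mem_undup.
by case: comm_eqb.
Qed.

Lemma detector_exists s : (deg s <= 4)%N ->
  exists (w : nat -> vecB) (phi : zvec), exists2 k : K, k != 0 &
    forall t, (deg t <= 4)%N -> phiB phi (meval_ac mulB w t) = if comm_eqb t s then k else 0.
Proof.
move=> deg_s; set L := leaves s; set rho := index^~ L.
have [k k_neq0 separates] := detector_separates (detects_canon deg_s).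
exists (fun i => if i \in L then embZ (gen_sum (canon s) (rho i)) else 0), (detector (canon s)), k.
  by [].
move=> t deg_t; have [/allP sub | /allPn[i i_t i_L]] := boolP (all (fun i => i \in L) (leaves t)).
  have rho_inj : {in leaves t ++ L &, injective rho}.
    have tL_L : {subset leaves t ++ L <= L} by move=> x; rewrite mem_cat => /orP[/sub|].
    by move=> x y /tL_L x_L /tL_L y_L; apply: index_inj.
  rewrite (eq_in_meval_ac mulB (w' := (embZ \o gen_sum (canon s)) \o rho)) => [|x /sub /= ->] //.
  rewrite -meval_ac_rename separates ?deg_rename ?comm_eqb_rename //.
  by rewrite !leaves_rename => _ /mapP[x /sub x_L ->]; apply: map_f.
rewrite (meval_ac_eq0 mulBZl mulBZr i_t) ?(negbTE i_L) // phiB0.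
by case: ifP => // /mem_leaves_comm_eqb /(_ i_t); rewrite (negbTE i_L).
Qed.

Lemma class_coef_identity_eq0 (f : napoly K) s :
  all (fun p => deg p.2 <= 4)%N f -> is_identity_LSB1_anti f -> (deg s <= 4)%N ->
  class_coef f s = 0.
Proof.
move=> f_deg f_id /detector_exists[w [phi [k k_neq0 separates]]].
have := eval_mulB_Tideal (f_id (@pvar K)) w.
rewrite (eval_peval_anti mulBDl mulBDr mulBZl mulBZr) => /(congr1 (phiB phi)).
rewrite phiB0 phiB_sum (eq_big_seq (fun q => k * if comm_eqb q.2 s then q.1 else 0)).
  by rewrite -mulr_sumr -big_mkcond => /eqP; rewrite mulf_eq0 (negbTE k_neq0) => /eqP.
move=> q q_f; rewrite separates ?(allP f_deg q q_f) //.
by case: comm_eqb; rewrite ?mulr0 ?mulr1 // mulrC.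
Qed.

End Model.

Local Close Scope ring_scope.
Unset Implicit Arguments.

Theorem mainTheorem9 (K : fieldType) (hK : [pchar K]%R =i pred0)
  (f : napoly K) (hdeg : all (fun p => deg p.2 <= 4) f) :
  is_identity_LSB1_anti f -> conseq_comm f.
Proof.
move=> f_id; apply: conseq_comm_of_class_coef => p p_f.
by apply: (class_coef_identity_eq0 hK hdeg f_id); apply: (allP hdeg).
Qed.
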